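(* If $\mathcal{S}\in\mathscr{W}$ is $C^4$-smooth and has isolated umbilic points at its poles, then the umbilic slopes $\mu_0,\mu_\pi$ of $\mathcal{S}$ are greater than or equal to $3$.
   Context: $\mathscr{W}$ is the set of embedded $C^2$-smooth topological 2-spheres in $\mathbb{R}^3$ that are rotationally symmetric and strictly convex. A surface in $\mathscr{W}$ is parametrised by the inverse Gauss map with $\theta\in[0,\pi]$ the angle between the outward normal and the symmetry axis ($\theta=0,\pi$ are the poles). With support function $r(\theta)=\vec X\cdot\hat n$, the radii of curvature are $r_1=\frac{\cos^2\theta}{\sin\theta}\frac{d}{d\theta}\left(\frac{r}{\cos\theta}\right)$, $r_2=r''+r$, and the astigmatism is $s=r_2-r_1$; umbilic points are where $s=0$. The umbilic slopes are $\mu_0=\lim_{\theta\to0}\frac{r_2(\theta)-r_2(0)}{r_1(\theta)-r_1(0)}$ and $\mu_\pi=\lim_{\theta\to\pi}\frac{r_2(\theta)-r_2(\pi)}{r_1(\theta)-r_1(\pi)}$. *)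

From Stdlib Require Import Reals.
From Coquelicot Require Import Coquelicot.
Open Scope R_scope.

(* A rotationally symmetric surface is described by its support function
   r(theta), theta = angle between outward normal and the symmetry axis.
   Smoothness of the surface at the poles means that r extends evenly
   across theta = 0 and theta = pi; we take r : R -> R with these
   reflection symmetries. *)

Definition Ck (k : nat) (r : R -> R) : Prop :=
  (forall n : nat, (n <= k)%nat -> forall x : R, ex_derive_n r n x) /\
  (forall x : R, continuous (Derive_n r k) x).

Definition pole_symmetric (r : R -> R) : Prop :=
  (forall t, r (- t) = r t) /\ (forall t, r (PI - t) = r (PI + t)).

(* r1 = cos^2 t / sin t * d/dt (r / cos) = r + r' cos t / sin t,
   with its (continuous-extension) value r + r'' at the poles. *)
Definition radius1 (r : R -> R) (t : R) : R :=
  if Req_EM_T (sin t) 0 then r t + Derive_n r 2 t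
  else r t + Derive r t * cos t / sin t.

Definition radius2 (r : R -> R) (t : R) : R := Derive_n r 2 t + r t.

Definition astig (r : R -> R) (t : R) : R := radius2 r t - radius1 r t.

Definition strictly_convex (r : R -> R) : Prop :=
  forall t, 0 <= t <= PI -> 0 < radius1 r t /\ 0 < radius2 r t.

Definition slope_ratio (r : R -> R) (p t : R) : R :=
  (radius2 r t - radius2 r p) / (radius1 r t - radius1 r p).

Definition umbilic_slope0 (r : R -> R) (mu : R) : Prop :=
  at_right 0 (fun t => radius1 r t <> radius1 r 0) /\
  filterlim (slope_ratio r 0) (at_right 0) (locally mu).

Definition umbilic_slopePI (r : R -> R) (mu : R) : Prop :=
  at_left PI (fun t => radius1 r t <> radius1 r PI) /\
  filterlim (slope_ratio r PI) (at_left PI) (locally mu).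

From Stdlib Require Import Reals Lra Lia.
From Coquelicot Require Import Coquelicot.
Open Scope R_scope.

(* Away from the poles [radius1] solves r1' = cot t (r2 - r1).  Near the pole 0
   put f = r1 - r1(0) and let q be the slope quotient; since r2(0) = r1(0) this
   reads f' = cot t (q - 1) f.  If the umbilic slope were mu < 3, then q < m < 3
   near 0 for some m, so ln f^2 - 2 (m - 1) ln (sin t) decreases and
   |f t| >= c t^(m-1) as t -> 0+.  But the support function is even and C^4,
   so Taylor expansion gives f = O(t^2), which contradicts m - 1 < 2.  The pole
   pi reduces to the pole 0 through the reflection t |-> pi - t. *)

Lemma Rabs_le_pow_of_derive (h h' : R -> R) (A x : R) (n : nat) :
  0 <= A -> 0 <= x ->
  (forall c, 0 <= c <= x -> is_derive h c (h' c)) ->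
  (forall c, 0 <= c <= x -> Rabs (h' c) <= A * c ^ n) ->
  Rabs (h x - h 0) <= A * x ^ S n.
Proof.
  intros HA Hx Hd Hb.
  destruct (MVT_gen h 0 x h') as [c [Hc Heq]].
  - intros y Hy; rewrite Rmin_left, Rmax_right in Hy by lra; apply Hd; lra.
  - intros y Hy; rewrite Rmin_left, Rmax_right in Hy by lra.
    apply continuity_pt_filterlim, (ex_derive_continuous (V := R_NormedModule)).
    exists (h' y); apply Hd; lra.
  - rewrite Rmin_left, Rmax_right in Hc by lra.
    rewrite Rminus_0_r in Heq; rewrite Heq, Rabs_mult, (Rabs_pos_eq x) by lra.
    assert (Hcx : A * c ^ n <= A * x ^ n) by (apply Rmult_le_compat_l, pow_incr; lra).
    pose proof (Hb c Hc); simpl; nra.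
Qed.

Lemma half_le_sin (x : R) : 0 <= x <= 1 -> x / 2 <= sin x.
Proof.
  intros Hx; destruct (pre_sin_bound x 0 ltac:(lra) ltac:(lra)) as [Hlb _].
  unfold sin_approx, sin_term in Hlb; simpl in Hlb; nra.
Qed.

Lemma Rabs_mul_cos_sub_sin_le (x : R) : 0 <= x <= 1 -> Rabs (x * cos x - sin x) <= x ^ 3.
Proof.
  intros Hx.
  replace (x * cos x - sin x) with ((x * cos x - sin x) - (0 * cos 0 - sin 0))
    by (rewrite sin_0; ring).
  rewrite <- (Rmult_1_l (x ^ 3)).
  apply (Rabs_le_pow_of_derive (fun y => y * cos y - sin y) (fun y => - (y * sin y)));
    try lra.
  - intros c _; auto_derive; [exact I | ring].
  - intros c Hc; rewrite Rabs_Ropp.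
    assert (Hs0 : 0 <= sin c) by (apply sin_ge_0; pose proof PI2_1; lra).
    assert (Hsc : sin c <= c).
    { destruct (Req_dec c 0) as [->|]; [rewrite sin_0; lra | apply Rlt_le, sin_lt_x; lra]. }
    rewrite Rabs_pos_eq by nra; simpl; nra.
Qed.

Lemma Derive_n_reflect (f : R -> R) (a x : R) (n : nat) :
  (forall k y, (k <= n)%nat -> ex_derive_n f k y) ->
  Derive_n (fun t => f (a - t)) n x = (-1) ^ n * Derive_n f n (a - x).
Proof.
  intros Hf.
  pose (g := fun z => f (z + a)).
  rewrite (Derive_n_ext _ (fun t => g (- t))) by (intros; unfold g; f_equal; ring).
  rewrite Derive_n_comp_opp.
  - unfold g; rewrite Derive_n_comp_trans.
    now replace (- x + a) with (a - x) by ring.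
  - apply filter_forall; intros y k Hk; apply ex_derive_n_comp_trans, Hf, Hk.
Qed.

Lemma Ck_reflect (k : nat) (f : R -> R) (a : R) : Ck k f -> Ck k (fun t => f (a - t)).
Proof.
  intros [Hex Hcont]; split.
  - intros n Hn x.
    pose (g := fun z => f (z + a)).
    apply (ex_derive_n_ext (fun t => g (- t))); [intros; unfold g; f_equal; ring|].
    apply ex_derive_n_comp_opp, filter_forall; intros y j Hj.
    apply ex_derive_n_comp_trans, Hex; lia.
  - intros x.
    apply (continuous_ext (fun t => (-1) ^ k * Derive_n f k (a - t))).
    { intros t; symmetry; apply Derive_n_reflect; intros j y Hj; apply Hex, Hj. }
    apply (continuous_scal_r ((-1) ^ k) (fun t => Derive_n f k (a - t))).
    apply (continuous_comp (fun t => a - t) (Derive_n f k)); [|apply Hcont].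
    apply continuity_pt_filterlim, continuity_pt_minus;
      [apply continuity_pt_const; intros ? ?; reflexivity | apply continuity_pt_id].
Qed.

Lemma Derive_n_odd_even_0 (f : R -> R) (j : nat) :
  (forall t, f (- t) = f t) ->
  (forall k y, (k <= S (2 * j))%nat -> ex_derive_n f k y) ->
  Derive_n f (S (2 * j)) 0 = 0.
Proof.
  intros E Hf.
  pose proof (Derive_n_reflect f 0 0 (S (2 * j)) Hf) as Hrefl.
  rewrite (Derive_n_ext _ f), pow_1_odd, Rminus_0_r in Hrefl
    by (intros t; rewrite Rminus_0_l; apply E).
  lra.
Qed.

Lemma even_C4_Taylor (r : R -> R) :
  Ck 4 r -> (forall t, r (- t) = r t) ->
  exists M, 0 <= M /\ forall x, 0 <= x <= 1 ->
    Rabs (Derive r x - Derive_n r 2 0 * x) <= M * x ^ 3 /\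
    Rabs (r x - r 0 - Derive_n r 2 0 / 2 * x ^ 2) <= M * x ^ 4.
Proof.
  intros [Hex Hcont] E.
  set (b := Derive_n r 2 0).
  assert (Hd : forall k x, (k <= 3)%nat -> is_derive (Derive_n r k) x (Derive_n r (S k) x))
    by (intros k x Hk; apply Derive_correct, (Hex (S k)); lia).
  assert (D1 : Derive_n r 1 0 = 0)
    by (apply (Derive_n_odd_even_0 r 0); [exact E | intros k y Hk; apply Hex; lia]).
  assert (D3 : Derive_n r 3 0 = 0)
    by (apply (Derive_n_odd_even_0 r 1); [exact E | intros k y Hk; apply Hex; lia]).
  destruct (continuity_ab_maj (fun x => Rabs (Derive_n r 4 x)) 0 1) as [x4 [Hmax _]]; [lra| |].
  { intros c _; apply (continuity_pt_comp (Derive_n r 4) Rabs);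
      [apply continuity_pt_filterlim, Hcont | apply Rcontinuity_abs]. }
  set (M := Rabs (Derive_n r 4 x4)).
  assert (HM : 0 <= M) by apply Rabs_pos.
  assert (B3 : forall x, 0 <= x <= 1 -> Rabs (Derive_n r 3 x) <= M * x ^ 1).
  { intros x Hx; rewrite <- (Rminus_0_r (Derive_n r 3 x)), <- D3.
    apply (Rabs_le_pow_of_derive _ (Derive_n r 4)); try lra.
    - intros c _; apply Hd; lia.
    - intros c Hc; rewrite pow_O, Rmult_1_r; apply Hmax; lra. }
  assert (B2 : forall x, 0 <= x <= 1 -> Rabs (Derive_n r 2 x - b) <= M * x ^ 2).
  { intros x Hx; apply (Rabs_le_pow_of_derive _ (Derive_n r 3)); try lra.
    - intros c _; apply Hd; lia.
    - intros c Hc; apply B3; lra. }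
  assert (B1 : forall x, 0 <= x <= 1 -> Rabs (Derive r x - b * x) <= M * x ^ 3).
  { intros x Hx; change (Derive r x) with (Derive_n r 1 x).
    replace (Derive_n r 1 x - b * x) with
      ((Derive_n r 1 x - b * x) - (Derive_n r 1 0 - b * 0)) by (rewrite D1; simpl; ring).
    apply (Rabs_le_pow_of_derive (fun y => Derive_n r 1 y - b * y) (fun y => Derive_n r 2 y - b));
      try lra.
    - intros c _; apply (is_derive_minus (Derive_n r 1) (fun y => b * y)); [apply Hd; lia|].
      auto_derive; [exact I | ring].
    - intros c Hc; apply B2; lra. }
  exists M; split; [exact HM|]; intros x Hx; split; [apply B1, Hx|].
  replace (r x - r 0 - b / 2 * x ^ 2) with
    ((r x - b / 2 * x ^ 2) - (r 0 - b / 2 * 0 ^ 2)) by ring.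
  apply (Rabs_le_pow_of_derive (fun y => r y - b / 2 * y ^ 2) (fun y => Derive r y - b * y));
    try lra.
  - intros c _; apply (is_derive_minus r (fun y => b / 2 * y ^ 2)); [apply (Hd 0%nat); lia|].
    auto_derive; [exact I | simpl; field].
  - intros c Hc; apply B1; lra.
Qed.

Lemma radius1_pole (r : R -> R) (p : R) : sin p = 0 -> radius1 r p = radius2 r p.
Proof. intros Hs; unfold radius1, radius2; destruct Req_EM_T; [ring | contradiction]. Qed.

Lemma radius1_off_pole (r : R -> R) (t : R) :
  sin t <> 0 -> radius1 r t = r t + Derive r t * cos t / sin t.
Proof. intros Hs; unfold radius1; destruct Req_EM_T; [contradiction | reflexivity]. Qed.

Lemma radius1_sub_pole_le (r : R -> R) :
  Ck 4 r -> (forall t, r (- t) = r t) ->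
  exists K, forall x, 0 < x <= 1 -> Rabs (radius1 r x - radius1 r 0) <= K * x ^ 2.
Proof.
  intros C E; destruct (even_C4_Taylor r C E) as [M [HM HT]].
  set (b := Derive_n r 2 0) in HT.
  exists (3 * (M + Rabs b)); intros x Hx.
  destruct (HT x ltac:(lra)) as [T1 T0].
  pose proof (half_le_sin x ltac:(lra)) as Hsin.
  pose proof (Rabs_mul_cos_sub_sin_le x ltac:(lra)) as Hxc.
  pose proof (Rabs_pos b) as Hb.
  set (N := (Derive r x - b * x) * cos x + b * (x * cos x - sin x)).
  assert (HN : Rabs N <= (M + Rabs b) * x ^ 3).
  { unfold N; eapply Rle_trans; [apply Rabs_triang|]; rewrite !Rabs_mult.
    assert (Rabs (cos x) <= 1) by (apply Rabs_le, COS_bound).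
    pose proof (Rabs_pos (cos x)); pose proof (Rabs_pos (Derive r x - b * x)); nra. }
  assert (HNs : Rabs (N / sin x) <= 2 * (M + Rabs b) * x ^ 2).
  { unfold Rdiv; rewrite Rabs_mult, Rabs_inv, (Rabs_pos_eq (sin x)) by lra.
    apply (Rmult_le_reg_r (sin x)); [lra|].
    rewrite Rmult_assoc, Rinv_l, Rmult_1_r by lra.
    assert (0 <= (M + Rabs b) * x ^ 2 * (2 * sin x - x))
      by (apply Rmult_le_pos; [apply Rmult_le_pos; [lra | apply pow2_ge_0] | lra]).
    simpl in *; nra. }
  rewrite radius1_off_pole, (radius1_pole r 0 sin_0) by lra; unfold radius2; fold b.
  replace (r x + Derive r x * cos x / sin x - (b + r 0)) with
    ((r x - r 0 - b / 2 * x ^ 2) + b / 2 * x ^ 2 + N / sin x) by (unfold N; field; lra).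
  eapply Rle_trans; [apply Rabs_triang|]; eapply Rle_trans;
    [apply Rplus_le_compat_r, Rabs_triang|].
  rewrite Rabs_mult, (Rabs_pos_eq (x ^ 2)), Rabs_div, (Rabs_pos_eq 2) by (try apply pow2_ge_0; lra).
  assert (0 <= x ^ 2) by apply pow2_ge_0.
  assert (M * x ^ 4 <= M * x ^ 2).
  { apply Rmult_le_compat_l; [lra|]; replace (x ^ 4) with (x ^ 2 * x ^ 2) by ring.
    assert (x ^ 2 <= 1) by (simpl; nra); nra. }
  assert (0 <= Rabs b * x ^ 2) by (apply Rmult_le_pos; lra).
  nra.
Qed.

Lemma is_derive_radius1 (r : R -> R) (t : R) :
  ex_derive_n r 1 t -> ex_derive_n r 2 t -> sin t <> 0 ->
  is_derive (radius1 r) t (cos t / sin t * (radius2 r t - radius1 r t)).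
Proof.
  intros H1 H2 Hs.
  assert (Hloc : locally t (fun y => sin y <> 0))
    by exact (proj1 (continuity_pt_filterlim sin t) (continuity_sin t) _ (open_neq 0 _ Hs)).
  apply (is_derive_ext_loc (fun y => r y + Derive r y * cos y / sin y)).
  { exact (filter_imp _ _ (fun y Hy => eq_sym (radius1_off_pole r y Hy)) Hloc). }
  auto_derive; [repeat split; auto|].
  rewrite radius1_off_pole by exact Hs; unfold radius2.
  change (Derive (fun x => r x) t) with (Derive r t).
  change (Derive (fun x => Derive r x) t) with (Derive_n r 2 t).
  field; exact Hs.
Qed.

Lemma cot_pos (t : R) : 0 < t <= 1 -> 0 < cos t / sin t.
Proof.
  intros Ht; pose proof PI2_1.
  apply Rdiv_lt_0_compat; [apply cos_gt_0 | apply sin_gt_0]; lra.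
Qed.

Lemma ln_sq_sub_ln_sin_antitone (f q : R -> R) (m d : R) :
  d <= 1 ->
  (forall t, 0 < t <= d ->
     f t <> 0 /\ q t < m /\ is_derive f t (cos t / sin t * (q t - 1) * f t)) ->
  forall s t, 0 < s <= t -> t <= d ->
  ln (f t * f t) - 2 * (m - 1) * ln (sin t) <= ln (f s * f s) - 2 * (m - 1) * ln (sin s).
Proof.
  intros Hd Hf s t Hst Htd.
  destruct (Req_dec s t) as [<-|Hne]; [lra|].
  set (H := fun y => ln (f y * f y) - 2 * (m - 1) * ln (sin y)).
  enough (H t < H s) by (unfold H in *; lra).
  apply Ropp_lt_cancel.
  apply (incr_function_le (fun y => - H y) s t (fun y => 2 * (cos y / sin y) * (m - q y)));
    simpl; try lra.
  - intros y Hsy Hyt; destruct (Hf y ltac:(lra)) as [Hfy [_ Hdy]].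
    assert (Hsin : 0 < sin y) by (apply Rlt_le_trans with (y / 2); [lra | apply half_le_sin; lra]).
    assert (Hex : ex_derive f y) by (eexists; exact Hdy).
    assert (Hff : 0 < f y * f y) by (destruct (Rdichotomy _ _ Hfy); nra).
    unfold H; auto_derive; [repeat split; assumption|].
    change (Derive (fun x => f x) y) with (Derive f y).
    rewrite (is_derive_unique _ _ _ Hdy); field; lra.
  - intros y Hsy Hyt; destruct (Hf y ltac:(lra)) as [_ [Hqy _]].
    pose proof (cot_pos y ltac:(lra)); nra.
Qed.

Lemma cot_ode_solution_not_O_sq (f q : R -> R) (m d K : R) :
  1 <= m < 3 -> 0 < d <= 1 ->
  (forall t, 0 < t <= d ->
     f t <> 0 /\ q t < m /\ is_derive f t (cos t / sin t * (q t - 1) * f t)) ->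
  ~ (forall t, 0 < t <= d -> Rabs (f t) <= K * t ^ 2).
Proof.
  intros Hm Hd Hf HK.
  set (H := fun y => ln (f y * f y) - 2 * (m - 1) * ln (sin y)).
  set (C := 2 * ln K - 2 * (m - 1) * ln (/ 2)).
  assert (Hup : forall t, 0 < t <= d -> H t <= C + (6 - 2 * m) * ln t).
  { intros t Ht; destruct (Hf t Ht) as [Hft _].
    pose proof (HK t Ht) as HKt; pose proof (Rabs_pos_lt _ Hft) as Hft'.
    assert (Ht2 : 0 < t ^ 2) by (apply pow_lt; lra).
    assert (HKpos : 0 < K) by (destruct (Rle_lt_dec K 0); [nra | lra]).
    assert (Hln_f : ln (f t * f t) <= 2 * ln K + 4 * ln t).
    { replace (2 * ln K + 4 * ln t) with (ln ((K * t ^ 2) * (K * t ^ 2)))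
        by (rewrite !ln_mult, ln_pow by (try apply Rmult_lt_0_compat; lra); simpl; ring).
      replace (f t * f t) with (Rabs (f t) * Rabs (f t))
        by (rewrite <- Rabs_mult; apply Rabs_pos_eq; nra).
      apply ln_le; [nra | apply Rmult_le_compat; lra]. }
    assert (Hln_sin : ln t + ln (/ 2) <= ln (sin t)).
    { rewrite <- ln_mult by lra; apply ln_le; [lra|].
      pose proof (half_le_sin t ltac:(lra)); lra. }
    unfold H, C; nra. }
  set (B := (H d - C) / (6 - 2 * m)).
  assert (Hev : at_right 0 (fun t => (0 < t <= d) /\ ln t < B)).
  { apply filter_and.
    - exists (mkposreal d (proj1 Hd)); intros y Hy Hy0.
      change (Rabs (y - 0) < d) in Hy; rewrite Rminus_0_r, Rabs_pos_eq in Hy; lra.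
    - apply (is_lim_ln_0 (fun y => y < B)); exists B; auto. }
  destruct (filter_ex _ Hev) as [t [Ht Hlt]].
  assert (Hmono : H d <= H t).
  { apply (ln_sq_sub_ln_sin_antitone f q m d); [lra | exact Hf | lra | lra]. }
  pose proof (Hup t Ht).
  apply (Rmult_lt_compat_l (6 - 2 * m)) in Hlt; [|lra].
  unfold B in Hlt; rewrite Rmult_div_assoc, Rmult_div_r in Hlt by lra.
  lra.
Qed.

Lemma umbilic_slope0_ge_3 (r : R -> R) (mu : R) :
  Ck 4 r -> (forall t, r (- t) = r t) -> umbilic_slope0 r mu -> 3 <= mu.
Proof.
  intros C E [Hne Hlim].
  destruct (Rle_lt_dec 3 mu) as [|Hmu]; [assumption | exfalso].
  set (m := Rmax ((mu + 3) / 2) 1).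
  assert (Hm : 1 <= m < 3) by (split; [apply Rmax_r | apply Rmax_lub_lt; lra]).
  assert (Hmum : 0 < m - mu) by (assert ((mu + 3) / 2 <= m) by apply Rmax_l; lra).
  assert (Hq : at_right 0 (fun t => slope_ratio r 0 t < m)).
  { apply (filter_imp (fun t => ball mu (mkposreal _ Hmum) (slope_ratio r 0 t))).
    - intros t Ht; change (Rabs (slope_ratio r 0 t - mu) < m - mu) in Ht.
      apply Rabs_def2 in Ht; lra.
    - exact (Hlim _ (locally_ball mu (mkposreal _ Hmum))). }
  destruct (filter_and _ _ Hne Hq) as [e He].
  destruct (radius1_sub_pole_le r C E) as [K HK].
  pose proof (cond_pos e) as He0.
  set (d := Rmin 1 (e / 2)).
  assert (Hd : 0 < d <= 1) by (split; [apply Rmin_pos | apply Rmin_l]; lra).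
  assert (Hde : d < e) by (assert (d <= e / 2) by apply Rmin_r; lra).
  apply (cot_ode_solution_not_O_sq (fun t => radius1 r t - radius1 r 0) (slope_ratio r 0) m d K);
    [exact Hm | exact Hd | | intros t Ht; apply HK; lra].
  intros t Ht.
  assert (Hball : ball 0 e t)
    by (change (Rabs (t - 0) < e); rewrite Rminus_0_r, Rabs_pos_eq; lra).
  destruct (He t Hball ltac:(lra)) as [Hf Hqt].
  assert (Hs : sin t <> 0) by (pose proof (half_le_sin t ltac:(lra)); lra).
  split; [lra | split; [exact Hqt |]].
  pose proof (is_derive_radius1 r t (proj1 C 1%nat ltac:(lia) t) (proj1 C 2%nat ltac:(lia) t) Hs)
    as Hd1.
  auto_derive; [eexists; exact Hd1|].
  change (Derive (fun x => radius1 r x) t) with (Derive (radius1 r) t).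
  rewrite (is_derive_unique _ _ _ Hd1).
  unfold slope_ratio; rewrite <- (radius1_pole r 0 sin_0); field; lra.
Qed.

Lemma radius1_reflect_PI (r : R -> R) (t : R) :
  (forall k y, (k <= 2)%nat -> ex_derive_n r k y) ->
  radius1 (fun s => r (PI - s)) t = radius1 r (PI - t).
Proof.
  intros Hr; unfold radius1.
  change (Derive (fun s => r (PI - s)) t) with (Derive_n (fun s => r (PI - s)) 1 t).
  change (Derive r (PI - t)) with (Derive_n r 1 (PI - t)).
  rewrite !Derive_n_reflect, sin_PI_x, Rtrigo_facts.cos_pi_minus
    by (intros k y Hk; apply Hr; lia).
  destruct Req_EM_T; [ring | field; assumption].
Qed.

Lemma radius2_reflect_PI (r : R -> R) (t : R) :
  (forall k y, (k <= 2)%nat -> ex_derive_n r k y) ->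
  radius2 (fun s => r (PI - s)) t = radius2 r (PI - t).
Proof. intros Hr; unfold radius2; rewrite Derive_n_reflect by exact Hr; ring. Qed.

Lemma filterlim_reflect_at_right (a : R) :
  filterlim (fun t => a - t) (at_right 0) (at_left a).
Proof.
  intros P [e He]; exists e; intros y Hy Hy0; apply He; [|lra].
  change (Rabs (a - y - a) < e); change (Rabs (y - 0) < e) in Hy.
  now replace (a - y - a) with (- (y - 0)) by ring; rewrite Rabs_Ropp.
Qed.

Lemma umbilic_slopePI_reflect (r : R -> R) (mu : R) :
  (forall k y, (k <= 2)%nat -> ex_derive_n r k y) ->
  umbilic_slopePI r mu -> umbilic_slope0 (fun s => r (PI - s)) mu.
Proof.
  intros Hr [Hne Hlim]; split.
  - eapply filter_imp; [|apply (filterlim_reflect_at_right PI), Hne]; intros t Ht.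
    now rewrite !radius1_reflect_PI, Rminus_0_r.
  - apply (filterlim_ext (fun t => slope_ratio r PI (PI - t))).
    { intros t; unfold slope_ratio.
      now rewrite !radius1_reflect_PI, !radius2_reflect_PI, Rminus_0_r. }
    eapply filterlim_comp; [apply filterlim_reflect_at_right | exact Hlim].
Qed.

Theorem proposition2p4 (r : R -> R) :
  Ck 4 r ->
  pole_symmetric r ->
  strictly_convex r ->
  (* isolated umbilic points at the poles *)
  (exists eps, 0 < eps /\ forall t, 0 < t < eps -> astig r t <> 0) ->
  (exists eps, 0 < eps /\ forall t, PI - eps < t < PI -> astig r t <> 0) ->
  (forall mu0, umbilic_slope0 r mu0 -> 3 <= mu0) /\
  (forall mupi, umbilic_slopePI r mupi -> 3 <= mupi).
Proof.
  intros C [Heven0 HevenPI] _ _ _; split.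
  - intros mu; apply umbilic_slope0_ge_3; assumption.
  - intros mu Hmu; apply (umbilic_slope0_ge_3 (fun t => r (PI - t))).
    + apply Ck_reflect, C.
    + intros t; replace (PI - - t) with (PI + t) by ring; symmetry; apply HevenPI.
    + apply umbilic_slopePI_reflect; [intros k y Hk; apply (proj1 C); lia | exact Hmu].
Qed.
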